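(* Let $D\ge1$, let $X=\{0,1\}^D$, and let $Q_D$ be the $D$-dimensional hypercube on $X$. For a real matrix $B$ with rows and columns indexed by $X$, the following are equivalent: (i) $B_{xy}=0$ for all $x,y\in X$ that are neither equal nor adjacent in $Q_D$; (ii) for all $1\le i<j\le D$, $$\alpha^*_i\alpha^*_jB-\alpha^*_iB\alpha^*_j-\alpha^*_jB\alpha^*_i+B\alpha^*_i\alpha^*_j=0.$$
   Context: $Q_D$ is the graph with vertex set $X=\{0,1\}^D$ (sequences $x=(x_1,\ldots,x_D)$), two vertices adjacent iff they differ in exactly one coordinate. For $1\le i\le D$, $\alpha^*_i$ is the diagonal matrix with $(x,x)$-entry $1$ if $x_i=0$ and $-1$ if $x_i=1$. *)

From HB Require Import structures.
From mathcomp Require Import all_boot all_order all_algebra.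
Set Implicit Arguments. Unset Strict Implicit. Unset Printing Implicit Defensive.
Import Order.TTheory GRing.Theory Num.Theory.
Local Open Scope ring_scope.

(* Vertex set X = {0,1}^D : functions from coordinates 'I_D (0-based) to bool
   (false = 0, true = 1). *)
Definition cube (D : nat) := {ffun 'I_D -> bool}.

Definition hdist (D : nat) (x y : cube D) : nat := #|[set k | x k != y k]|.
Definition cube_adj (D : nat) (x y : cube D) : bool := hdist x y == 1%N.

Definition cmx (R : Type) (D : nat) := cube D -> cube D -> R.

Definition cmul (R : realFieldType) (D : nat) (A B : cmx R D) : cmx R D :=
  fun x y => \sum_(z : cube D) A x z * B z y.

Definition alpha_star (R : realFieldType) (D : nat) (i : 'I_D) : cmx R D :=
  fun x y => if x == y then (if x i then -1 else 1) else 0.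

(** Both conditions are statements about single entries of B.  Conjugating
    B by the diagonal sign matrices multiplies its entry B_xy by a product of
    signs, and the expression in (ii) equals
      (s_i x - s_i y) (s_j x - s_j y) B_xy,
    where s_i x = ±1 is the i-th sign of x.  A factor s_i x - s_i y vanishes
    exactly when x and y agree in coordinate i, so (ii) says that B_xy = 0
    whenever x and y differ in two distinct coordinates, i.e. whenever their
    Hamming distance is at least 2, which is (i). *)

From mathcomp Require Import all_boot all_order all_algebra.
From mathcomp Require Import ring.
Set Implicit Arguments. Unset Strict Implicit. Unset Printing Implicit Defensive.
Import Order.TTheory GRing.Theory Num.Theory.
Local Open Scope ring_scope.

Section HammingDistance.

Variable D : nat.
Implicit Types x y : cube D.

Lemma hdist_eq0 x y : (hdist x y == 0%N) = (x == y).
Proof.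
rewrite /hdist cards_eq0; apply/eqP/eqP => [xy | ->]; last first.
  by apply/setP => k; rewrite !inE eqxx.
apply/ffunP => k; apply/eqP; apply: contraFT (in_set0 k) => xyk.
by rewrite -xy inE.
Qed.

Lemma hdist_gt1P x y :
  reflect (exists i j : 'I_D, [/\ (i < j)%N, x i != y i & x j != y j])
          (1 < hdist x y)%N.
Proof.
apply: (iffP card_gt1P) => [[i [j []]] | [i [j [ij xi xj]]]].
  rewrite !inE => xi xj; case: (ltngtP i j) => [ij | ji | /val_inj ->].
  - by exists i, j.
  - by exists j, i.
  - by rewrite eqxx.
by exists i, j; rewrite !inE xi xj -val_eqE /= neq_ltn ij.
Qed.

Lemma neq_cube_adj x y : x != y -> ~~ cube_adj x y = (1 < hdist x y)%N.
Proof. by rewrite /cube_adj -hdist_eq0; case: (hdist x y) => [|[|n]]. Qed.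

End HammingDistance.

Section DiagonalMatrices.

Variables (R : realFieldType) (D : nat).
Implicit Types (d e : cube D -> R) (A B M N : cmx R D).

Definition cdiag d : cmx R D := fun x y => if x == y then d x else 0.

Lemma cmul_cdiagl d A x y : cmul (cdiag d) A x y = d x * A x y.
Proof.
rewrite /cmul (bigD1 x) //= big1 ?addr0 => [|z /negbTE zx].
  by rewrite /cdiag eqxx.
by rewrite /cdiag eq_sym zx mul0r.
Qed.

Lemma cmul_cdiagr d A x y : cmul A (cdiag d) x y = A x y * d y.
Proof.
rewrite /cmul (bigD1 y) //= big1 ?addr0 => [|z /negbTE zy].
  by rewrite /cdiag eqxx.
by rewrite /cdiag zy mulr0.
Qed.

Lemma eq_cmull A {M N} : M =2 N -> cmul M A =2 cmul N A.
Proof. by move=> MN x y; apply: eq_bigr => z _; rewrite MN. Qed.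

Lemma eq_cmulr A {M N} : M =2 N -> cmul A M =2 cmul A N.
Proof. by move=> MN x y; apply: eq_bigr => z _; rewrite MN. Qed.

Lemma cmul_cdiag d e : cmul (cdiag d) (cdiag e) =2 cdiag (fun x => d x * e x).
Proof.
by move=> x y; rewrite cmul_cdiagl /cdiag; case: eqP => [->|]; rewrite ?mulr0.
Qed.

Lemma cdiag_double_commutator d e B x y :
  cmul (cmul (cdiag d) (cdiag e)) B x y
  - cmul (cmul (cdiag d) B) (cdiag e) x y
  - cmul (cmul (cdiag e) B) (cdiag d) x y
  + cmul B (cmul (cdiag d) (cdiag e)) x y
  = (d x - d y) * (e x - e y) * B x y.
Proof.
rewrite (eq_cmull B (cmul_cdiag d e)) (eq_cmulr B (cmul_cdiag d e)).
by rewrite !cmul_cdiagl !cmul_cdiagr !cmul_cdiagl; ring.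
Qed.

Definition bit_sign (b : bool) : R := if b then -1 else 1.

Lemma bit_sign_subr_eq0 b c : (bit_sign b - bit_sign c == 0) = (b == c).
Proof.
rewrite subr_eq0 /bit_sign.
by case: b; case: c; rewrite ?eqxx // ?[1 == _]eq_sym eqNr oner_eq0.
Qed.

Lemma alpha_starE (i : 'I_D) :
  alpha_star R i = cdiag (fun x => bit_sign (x i)).
Proof. by []. Qed.

Lemma alpha_star_double_commutator_eq0 (i j : 'I_D) B x y :
  (cmul (cmul (alpha_star R i) (alpha_star R j)) B x y
   - cmul (cmul (alpha_star R i) B) (alpha_star R j) x y
   - cmul (cmul (alpha_star R j) B) (alpha_star R i) x y
   + cmul B (cmul (alpha_star R i) (alpha_star R j)) x y == 0)
  = [|| x i == y i, x j == y j | B x y == 0].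
Proof.
by rewrite !alpha_starE cdiag_double_commutator !mulf_eq0 !bit_sign_subr_eq0 orbA.
Qed.

End DiagonalMatrices.

Theorem lemma7p2 (R : realFieldType) (D : nat) (hD : (0 < D)%N) (B : cmx R D) :
  (forall x y : cube D, x != y -> ~~ cube_adj x y -> B x y = 0) <->
  (forall i j : 'I_D, (i < j)%N ->
     forall x y : cube D,
       cmul (cmul (alpha_star R i) (alpha_star R j)) B x y
       - cmul (cmul (alpha_star R i) B) (alpha_star R j) x y
       - cmul (cmul (alpha_star R j) B) (alpha_star R i) x y
       + cmul B (cmul (alpha_star R i) (alpha_star R j)) x y = 0).
Proof.
split=> [Bfar i j ij x y | Bcomm x y xy].
- apply/eqP; rewrite alpha_star_double_commutator_eq0.
  apply/norP => -[xi /norP [xj /eqP []]].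
  have xy : x != y by apply: contraNneq xi => ->.
  apply: (Bfar x y xy); rewrite neq_cube_adj //.
  by apply/hdist_gt1P; exists i, j.
- rewrite neq_cube_adj // => /hdist_gt1P [i [j [ij xi xj]]].
  have /eqP := Bcomm i j ij x y.
  by rewrite alpha_star_double_commutator_eq0 (negbTE xi) (negbTE xj) => /eqP.
Qed.
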